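(* For any irrevocable (non-wasteful) distribution policy $\varphi$, when the characteristic functions range over $V_{\ge3}$, the competitive ratio of $\varphi$ with respect to greedy players is at most $\frac{3\mathsf{min}}{\mathsf{max}}$.
   Context: Players: a finite set $N=\{a_1,\dots,a_n\}$. A characteristic function is $v:2^N\to\mathbb{R}_{\ge 0}$ with $v(\emptyset)=0$. There are fixed, known constants $0<\mathsf{min}\le\mathsf{max}$ and every $v$ considered is monotone and bounded: $\mathsf{min}\le v(S)\le v(T)\le\mathsf{max}$ for all nonempty $S\subseteq T\subseteq N$. For an integer $\delta\ge1$, $V_\delta$ denotes the set of such $v$ with $\delta\cdot\mathsf{min}\le\mathsf{max}<(\delta+1)\cdot\mathsf{min}$, and $V_{\ge3}=\bigcup_{\delta\ge3}V_\delta$. A coalition structure is a partition $C$ of $N$; its social welfare is $\mathsf{SW}(C\mid v)=\sum_{S\in C}v(S)$. Online process: an arrival order is a permutation $\pi=(\pi_1,\dots,\pi_n)$ of $N$; player $\pi_t$ arrives at time $t$. For $S\subseteq N$, $\pi_{|S}$ denotes the players of $S$ in the relative order of $\pi$; $\pi_{|S}$ is a prefix of $\pi_{|T}$ if $S\subseteq T$ and the players of $S$ are the first $|S|$ players of $\pi_{|T}$. Let $C^{t-1}$ be the coalition structure of players arrived before time $t$ ($C^0=\emptyset$). At time $t$, player $\pi_t$ either joins an existing coalition $S\in C^{t-1}$ or forms $\{\pi_t\}$ (choice $S=\emptyset$); decisions are never revised. A distribution policy $\varphi$ assigns to every $S\subseteq N$ and order $\pi_{|S}$ a vector $(\varphi_i(S,\pi_{|S}\mid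 v))_{i\in S}$ with $\sum_{i\in S}\varphi_i(S,\pi_{|S})=v(S)$ (non-wasteful). It is irrevocable if for every $\pi$, every $S\subseteq T\subseteq N$ with $\pi_{|S}$ a prefix of $\pi_{|T}$ and every $i\in S$, $\varphi_i(S,\pi_{|S})\le\varphi_i(T,\pi_{|T})$. Greedy players: $\pi_t$ chooses $S^*\in\arg\max_{S\in C^{t-1}\cup\{\emptyset\}}\varphi_{\pi_t}(S\cup\{\pi_t\},\pi_{|S\cup\{\pi_t\}})$ (predetermined tie-breaking). $C_g(v,\pi\mid\varphi)$ is the final structure. The competitive ratio over a class of characteristic functions is $\alpha=\inf_{v,\pi}\mathsf{SW}(C_g(v,\pi\mid\varphi))/\max_C\mathsf{SW}(C\mid v)$, over $v$ in the class (and any number of players) and all arrival orders $\pi$. *)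

From HB Require Import structures.
From mathcomp Require Import all_boot all_order all_algebra.
From mathcomp Require Import reals.
Set Implicit Arguments. Unset Strict Implicit. Unset Printing Implicit Defensive.
Import Order.TTheory GRing.Theory Num.Theory.
Local Open Scope ring_scope.

Definition arrival_order (n : nat) (pi : seq 'I_n) : bool :=
  perm_eq pi (enum 'I_n).

Definition restr (n : nat) (pi : seq 'I_n) (S : {set 'I_n}) : seq 'I_n :=
  [seq x <- pi | x \in S].

Definition mono_bounded (R : realType) (mn mx : R) (n : nat)
    (v : {set 'I_n} -> R) : Prop :=
  v set0 = 0 /\
  forall S T : {set 'I_n}, S != set0 -> S \subset T ->
    mn <= v S /\ v S <= v T /\ v T <= mx.

Definition in_V (R : realType) (delta : nat) (mn mx : R) (n : nat)
    (v : {set 'I_n} -> R) : Prop :=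
  mono_bounded mn mx v /\ delta%:R * mn <= mx /\ mx < (delta.+1)%:R * mn.

Definition in_Vge3 (R : realType) (mn mx : R) (n : nat)
    (v : {set 'I_n} -> R) : Prop :=
  exists delta : nat, (3 <= delta)%N /\ in_V delta mn mx v.

(* A distribution policy: phi n v S s i = share of player i in coalition S
   formed in order s, under characteristic function v on n players. *)
Definition policy (R : realType) :=
  forall n : nat, ({set 'I_n} -> R) -> {set 'I_n} -> seq 'I_n -> 'I_n -> R.

Definition non_wasteful (R : realType) (mn mx : R) (phi : policy R) : Prop :=
  forall (n : nat) (v : {set 'I_n} -> R) (S : {set 'I_n}) (s : seq 'I_n),
    in_Vge3 mn mx v -> perm_eq s (enum S) ->
    \sum_(i in S) phi n v S s i = v S.

Definition irrevocable (R : realType) (mn mx : R) (phi : policy R) : Prop :=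
  forall (n : nat) (v : {set 'I_n} -> R) (pi : seq 'I_n) (S T : {set 'I_n})
         (i : 'I_n),
    in_Vge3 mn mx v -> arrival_order pi ->
    S \subset T -> prefix (restr pi S) (restr pi T) -> i \in S ->
    phi n v S (restr pi S) i <= phi n v T (restr pi T) i.

(* Payoff of arriving player p when joining existing coalition S
   (S = set0 means forming the singleton {p}). *)
Definition gain (R : realType) (phi : policy R) (n : nat)
    (v : {set 'I_n} -> R) (pi : seq 'I_n) (p : 'I_n) (S : {set 'I_n}) : R :=
  phi n v (p |: S) (restr pi (p |: S)) p.

(* A (predetermined) tie-breaking rule: given n, v, pi, the current
   coalition structure C and the arriving player p, it returns the chosen
   option (a coalition of C, or set0 for forming a new singleton). *)
Definition tiebreak (R : realType) :=
  forall n : nat, ({set 'I_n} -> R) -> seq 'I_n -> seq {set 'I_n} -> 'I_n ->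
    {set 'I_n}.

Definition greedy_choice (R : realType) (phi : policy R) (tb : tiebreak R)
    : Prop :=
  forall (n : nat) (v : {set 'I_n} -> R) (pi : seq 'I_n)
         (C : seq {set 'I_n}) (p : 'I_n),
    tb n v pi C p \in set0 :: C /\
    forall X : {set 'I_n}, X \in set0 :: C -> gain phi v pi p X <= gain phi v pi p (tb n v pi C p).

Definition join_step (n : nat) (C : seq {set 'I_n}) (ch : {set 'I_n})
    (p : 'I_n) : seq {set 'I_n} :=
  if ch == set0 then [set p] :: C
  else [seq (if X == ch then p |: X else X) | X <- C].

Definition greedy_outcome (R : realType) (phi : policy R) (tb : tiebreak R)
    (n : nat) (v : {set 'I_n} -> R) (pi : seq 'I_n) : seq {set 'I_n} :=
  foldl (fun C p => join_step C (tb n v pi C p) p) [::] pi.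

Definition SW (R : realType) (n : nat) (v : {set 'I_n} -> R)
    (C : seq {set 'I_n}) : R :=
  \sum_(S <- C) v S.

Definition OPT (R : realType) (n : nat) (v : {set 'I_n} -> R) : R :=
  \big[Num.max/0]_(P : {set {set 'I_n}} | partition P [set: 'I_n])
     \sum_(S in P) v S.

(** On three players, let every coalition other than the grand coalition be
    worth [mn] and the grand coalition [mx].  Irrevocability protects the share
    [mn] that an existing singleton already holds, so a player joining a
    singleton gets at most [v {x, p} - v {x} = 0], while staying alone yields
    [mn > 0].  Hence greedy players end up as three singletons with welfare
    [3 mn], whereas the grand coalition alone achieves [mx]. *)

From mathcomp Require Import all_boot all_order all_algebra.
From mathcomp Require Import reals.
From mathcomp Require Import lra.
Set Implicit Arguments. Unset Strict Implicit. Unset Printing Implicit Defensive.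
Import Order.TTheory GRing.Theory Num.Theory.
Local Open Scope ring_scope.

Lemma restr_perm_enum n (pi : seq 'I_n) (S : {set 'I_n}) :
  arrival_order pi -> perm_eq (restr pi S) (enum S).
Proof.
move=> pi_perm; rewrite /restr.
have -> : enum S = [seq x <- enum 'I_n | x \in S] by rewrite enumT /enum_mem.
exact: perm_filter.
Qed.

Lemma setT_ord_neq0 n : (0 < n)%N -> [set: 'I_n] != set0.
Proof. by rewrite -card_gt0 cardsT card_ord. Qed.

Lemma OPT_ge_setT (R : realType) n (v : {set 'I_n} -> R) :
  (0 < n)%N -> v [set: 'I_n] <= OPT v.
Proof.
move=> n_gt0; rewrite /OPT.
apply: (bigmax_sup [set setT]); last by rewrite big_set1.
by rewrite /partition cover1 trivIset1 eqxx inE eq_sym setT_ord_neq0.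
Qed.

Section GreedyGains.

Variables (R : realType) (mn mx : R) (phi : policy R).
Hypotheses (phi_nw : non_wasteful mn mx phi) (phi_irr : irrevocable mn mx phi).
Variables (n : nat) (v : {set 'I_n} -> R) (pi : seq 'I_n).
Hypotheses (v_class : in_Vge3 mn mx v) (pi_order : arrival_order pi).

Lemma gain_new_coalition p : gain phi v pi p set0 = v [set p].
Proof.
have := @phi_nw n v [set p] _ v_class (restr_perm_enum _ pi_order).
by rewrite big_set1 /gain setU0.
Qed.

(* Each member of [S] keeps at least its old share, so the newcomer gets at
   most the marginal contribution. *)
Lemma gain_le_marginal p (S : {set 'I_n}) :
  p \notin S -> prefix (restr pi S) (restr pi (p |: S)) ->
  gain phi v pi p S <= v (p |: S) - v S.
Proof.
move=> pNS S_prefix.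
have sum_pS := @phi_nw n v (p |: S) _ v_class (restr_perm_enum _ pi_order).
have sum_S := @phi_nw n v S _ v_class (restr_perm_enum _ pi_order).
rewrite big_setU1 //= in sum_pS.
have shares_grow : v S <= \sum_(i in S) phi v (p |: S) (restr pi (p |: S)) i.
  rewrite -sum_S; apply: ler_sum => i iS.
  by apply: phi_irr => //; exact: subsetUr.
by rewrite /gain lerBrDr -sum_pS lerD2l.
Qed.

End GreedyGains.

Lemma tiebreak_new_coalition (R : realType) (phi : policy R) (tb : tiebreak R)
    n (v : {set 'I_n} -> R) pi (C : seq {set 'I_n}) p :
  greedy_choice phi tb ->
  (forall X, X \in C -> gain phi v pi p X < gain phi v pi p set0) ->
  tb n v pi C p = set0.
Proof.
move=> tb_greedy worse; have [tb_opt tb_max] := tb_greedy n v pi C p.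
move: tb_opt; rewrite inE => /orP[/eqP //|tbC].
by have := tb_max set0 (mem_head _ _); rewrite leNgt worse.
Qed.

Definition grand_coalition_game (R : realType) (mn mx : R) n :
    {set 'I_n} -> R :=
  fun S => if S == set0 then 0 else if S == setT then mx else mn.

Lemma grand_coalition_game_proper (R : realType) (mn mx : R) n S :
  S != set0 -> S != setT -> grand_coalition_game mn mx (n := n) S = mn.
Proof. by rewrite /grand_coalition_game => /negPf-> /negPf->. Qed.

Lemma grand_coalition_game_setT (R : realType) (mn mx : R) n :
  (0 < n)%N -> grand_coalition_game mn mx [set: 'I_n] = mx.
Proof.
by move=> n_gt0; rewrite /grand_coalition_game (negPf (setT_ord_neq0 n_gt0)) eqxx.
Qed.

Lemma grand_coalition_game_in_V (R : realType) (mn mx : R) n delta :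
  mn <= mx -> delta%:R * mn <= mx -> mx < delta.+1%:R * mn ->
  in_V delta mn mx (grand_coalition_game mn mx (n := n)).
Proof.
move=> mn_mx delta_lo delta_hi; split=> //; split=> [|S T S0 ST].
  by rewrite /grand_coalition_game eqxx.
have T0 : T != set0.
  by rewrite -card_gt0 (leq_trans _ (subset_leq_card ST)) // card_gt0.
rewrite /grand_coalition_game (negPf S0) (negPf T0); case: (S =P setT) => [S_full|_].
  by move: ST; rewrite S_full subTset => /eqP->; rewrite eqxx !lexx.
by case: eqP => _; rewrite ?lexx.
Qed.

Definition o0 : 'I_3 := @Ordinal 3 0 isT.
Definition o1 : 'I_3 := @Ordinal 3 1 isT.
Definition o2 : 'I_3 := @Ordinal 3 2 isT.

Lemma arrival_order_o012 : arrival_order [:: o0; o1; o2].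
Proof.
apply: uniq_perm => //; first exact: enum_uniq.
by move=> [[|[|[|m]]] lt_m3]; rewrite mem_enum inE.
Qed.

Section ThreePlayers.

Variables (R : realType) (mn mx : R) (phi : policy R) (tb : tiebreak R).
Hypotheses (mn_gt0 : 0 < mn) (phi_nw : non_wasteful mn mx phi).
Hypotheses (phi_irr : irrevocable mn mx phi) (tb_greedy : greedy_choice phi tb).

Let v := grand_coalition_game mn mx (n := 3).
Let pi := [:: o0; o1; o2].
Hypothesis v_class : in_Vge3 mn mx v.

Lemma proper_coalition_value (S : {set 'I_3}) : (0 < #|S| < 3)%N -> v S = mn.
Proof.
move=> /andP[S_gt0 S_lt3]; apply: grand_coalition_game_proper.
  by rewrite -card_gt0.
by apply: contraTneq S_lt3 => ->; rewrite cardsT card_ord.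
Qed.

Lemma gain_join_singleton_lt_new (x p : 'I_3) :
  x != p -> prefix (restr pi [set x]) (restr pi (p |: [set x])) ->
  gain phi v pi p [set x] < gain phi v pi p set0.
Proof.
move=> xp x_first; have pNx : p \notin [set x] by rewrite inE eq_sym.
rewrite (gain_new_coalition phi_nw v_class arrival_order_o012).
rewrite (proper_coalition_value (S := [set p])) ?cards1 //.
have := gain_le_marginal phi_nw phi_irr v_class arrival_order_o012 pNx x_first.
move/le_lt_trans; apply.
by rewrite !proper_coalition_value ?cards1 ?cardsU1 ?cards1 ?pNx // subrr.
Qed.

Lemma greedy_outcome_singletons :
  greedy_outcome phi tb v pi = [:: [set o2]; [set o1]; [set o0]].
Proof.
have tb0 : tb v pi [::] o0 = set0 by exact: tiebreak_new_coalition.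
have tb1 : tb v pi [:: [set o0]] o1 = set0.
  apply: tiebreak_new_coalition => // X; rewrite inE => /eqP->.
  by apply: gain_join_singleton_lt_new; rewrite /restr /= ?inE.
have tb2 : tb v pi [:: [set o1]; [set o0]] o2 = set0.
  apply: tiebreak_new_coalition => // X; rewrite !inE => /orP[]/eqP->;
  by apply: gain_join_singleton_lt_new; rewrite /restr /= ?inE.
by rewrite /greedy_outcome /= tb0 /join_step eqxx tb1 eqxx tb2 eqxx.
Qed.

Lemma greedy_outcome_welfare : SW v (greedy_outcome phi tb v pi) = 3%:R * mn.
Proof.
rewrite greedy_outcome_singletons /SW !big_cons big_nil.
by rewrite !proper_coalition_value ?cards1 //; lra.
Qed.

End ThreePlayers.

Theorem theorem2 (R : realType) (mn mx : R)
    (hmn : 0 < mn) (hmnmx : mn <= mx)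
    (hclass : exists delta : nat, (3 <= delta)%N /\
                delta%:R * mn <= mx /\ mx < (delta.+1)%:R * mn)
    (phi : policy R) (tb : tiebreak R)
    (hnw : non_wasteful mn mx phi) (hirr : irrevocable mn mx phi)
    (htb : greedy_choice phi tb) :
  forall eps : R, 0 < eps ->
    exists (n : nat) (v : {set 'I_n} -> R) (pi : seq 'I_n),
      (0 < n)%N /\ in_Vge3 mn mx v /\ arrival_order pi /\
      SW v (greedy_outcome phi tb v pi) / OPT v <= 3%:R * mn / mx + eps.
Proof.
move=> eps eps_gt0; have [delta [delta_ge3 [delta_lo delta_hi]]] := hclass.
set v := grand_coalition_game mn mx (n := 3).
have v_class : in_Vge3 mn mx v.
  by exists delta; split; last exact: grand_coalition_game_in_V.
exists 3%N, v, [:: o0; o1; o2]; do !split => //; first exact: arrival_order_o012.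
rewrite (greedy_outcome_welfare hmn hnw hirr htb v_class).
have mx_le_OPT : mx <= OPT v.
  by have := OPT_ge_setT v isT; rewrite /v grand_coalition_game_setT.
have mx_gt0 : 0 < mx by exact: lt_le_trans hmnmx.
have ratio_le : 3%:R * mn / OPT v <= 3%:R * mn / mx.
  apply: ler_wpM2l; first by rewrite mulr_ge0 // ltW.
  by rewrite lef_pV2 ?posrE // (lt_le_trans mx_gt0 mx_le_OPT).
by rewrite (le_trans ratio_le) // lerDl ltW.
Qed.
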